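(* Let $X$ be a finite set with $|X|\geq 2$. Then the $C^*$-algebra $\mathbb{A}_X$ is non-commutative and infinite dimensional.
   Context: For $n\geq 0$, $X^n$ is the set of words of length $n$ in $X$, with $X^0=\{\varnothing\}$. $\mathbb{A}_X$ is the universal $C^*$-algebra generated by elements $\{a_{u,v}: u,v\in X^n,\ n\geq 0\}$ subject to: (i) $a_{\varnothing,\varnothing}=1$; (ii) $a_{u,v}^*=a_{u,v}^2=a_{u,v}$; (iii) for all $n\geq0$, $u,v\in X^n$, $x\in X$: $a_{u,v}=\sum_{y\in X}a_{ux,vy}=\sum_{z\in X}a_{uz,vx}$. *)

From HB Require Import structures.
From mathcomp Require Import all_boot all_order all_algebra.
From mathcomp Require Import reals.
From mathcomp Require Import complex.
Set Implicit Arguments. Unset Strict Implicit. Unset Printing Implicit Defensive.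
Import Order.TTheory GRing.Theory Num.Theory.
Local Open Scope ring_scope.

Definition cstar_axioms (R : realType) (A : algType R[i])
    (star : A -> A) (nrm : A -> R) : Prop :=
  (forall x, star (star x) = x) /\
  (forall x y, star (x + y) = star x + star y) /\
  (forall (c : R[i]) x, star (c *: x) = Num.conj c *: star x) /\
  (forall x y, star (x * y) = star y * star x) /\
  (forall x, nrm x = 0 -> x = 0) /\
  (forall x y, nrm (x + y) <= nrm x + nrm y) /\
  (forall (c : R[i]) x, ((nrm (c *: x))%:C)%C = `|c| * ((nrm x)%:C)%C) /\
  (forall x y, nrm (x * y) <= nrm x * nrm y) /\
  (forall x, nrm (star x * x) = nrm x ^+ 2) /\
  (forall u : nat -> A,
      (forall e : R, 0 < e -> exists N, forall m n, (N <= m)%N -> (N <= n)%N ->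
         nrm (u m - u n) < e) ->
      exists l : A, forall e : R, 0 < e -> exists N, forall n, (N <= n)%N ->
         nrm (u n - l) < e).

Record cstar_alg (R : realType) := CStarAlg {
  cs_car :> algType R[i];
  cs_star : cs_car -> cs_car;
  cs_norm : cs_car -> R;
  cs_ax : cstar_axioms cs_star cs_norm
}.

Definition is_star_hom (R : realType) (A B : cstar_alg R) (f : A -> B) : Prop :=
  [/\ (forall x y, f (x + y) = f x + f y),
      (forall (c : R[i]) x, f (c *: x) = c *: f x),
      (forall x y, f (x * y) = f x * f y),
      f 1 = 1 &
      (forall x, f (cs_star x) = cs_star (f x))].

(* Words over X are sequences; "u x" (u followed by the letter x) is rcons u x.
   A family of elements a_{u,v} is given as g : seq X -> seq X -> A; only its
   values at pairs (u,v) with size u = size v are relevant. *)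
Definition AX_relations (R : realType) (X : finType) (A : cstar_alg R)
    (g : seq X -> seq X -> A) : Prop :=
  [/\ g [::] [::] = 1,
      (forall u v, size u = size v -> cs_star (g u v) = g u v),
      (forall u v, size u = size v -> g u v * g u v = g u v) &
      (forall u v (x : X), size u = size v ->
          g u v = \sum_(y : X) g (rcons u x) (rcons v y) /\
          g u v = \sum_(z : X) g (rcons u z) (rcons v x))].

Definition is_universal_AX (R : realType) (X : finType) (A : cstar_alg R)
    (g : seq X -> seq X -> A) : Prop :=
  AX_relations g /\
  forall (B : cstar_alg R) (h : seq X -> seq X -> B), AX_relations h ->
    (exists f : A -> B, is_star_hom f /\
        forall u v, size u = size v -> f (g u v) = h u v) /\
    (forall f1 f2 : A -> B, is_star_hom f1 -> is_star_hom f2 ->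
        (forall u v, size u = size v -> f1 (g u v) = h u v) ->
        (forall u v, size u = size v -> f2 (g u v) = h u v) ->
        forall x, f1 x = f2 x).

Definition noncommutative (R : realType) (A : cstar_alg R) : Prop :=
  exists x y : A, x * y <> y * x.

Definition infinite_dimensional (R : realType) (A : cstar_alg R) : Prop :=
  forall n : nat, exists v : 'I_n -> A,
    forall c : 'I_n -> R[i], \sum_(i < n) c i *: v i = 0 -> forall i, c i = 0.

(* Both properties are witnessed by concrete representations of the relations
   in matrix algebras M_k(C), which the universal property transports back
   to A_X.  Given letters a <> b and two noncommuting projections P, Q of
   M_2(C), let a_{xu,yv} vanish unless x = y, and let the second level below
   x be the magic unitary that is [P, 1 - P; 1 - P, P] on {a, b} (or the
   same with Q, when x <> a) and the identity elsewhere; then a_{aa,aa} and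
   a_{ba,ba} go to P and Q.  Every automorphism sigma of the tree of words
   gives a character a_{u,v} |-> [v = sigma u]; with sigma_j swapping a and b
   at position j (j <= n), the resulting diagonal representation in
   M_{n+1}(C) sends a_{a^(i+1), a^i b} to the matrix unit e_ii for i < n, so
   these n elements are linearly independent. *)

From HB Require Import structures.
From mathcomp Require Import all_boot all_order all_algebra perm.
From mathcomp Require Import reals complex.
From mathcomp Require Import classical_sets topology normedtype.
From mathcomp Require Import ring lra.
Set Implicit Arguments. Unset Strict Implicit. Unset Printing Implicit Defensive.
Import Order.TTheory GRing.Theory Num.Theory numFieldNormedType.Exports.
Local Open Scope classical_set_scope.
Local Open Scope ring_scope.
Local Notation Re := complex.Re.
Local Notation Im := complex.Im.

Section ComplexModulus.
Variable R : realType.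
Implicit Types (c d : R[i]) (r : R).

Definition sqnormc c : R := Re c ^+ 2 + Im c ^+ 2.

Lemma sqnormc_ge0 c : 0 <= sqnormc c.
Proof. by rewrite addr_ge0 ?sqr_ge0. Qed.

Lemma sqnormc_eq0 c : sqnormc c = 0 -> c = 0.
Proof.
case: c => a b /eqP; rewrite /sqnormc paddr_eq0 ?sqr_ge0 // !sqrf_eq0 /=.
by case/andP => /eqP -> /eqP ->.
Qed.

Lemma ReM c d : Re (c * d) = Re c * Re d - Im c * Im d.
Proof. by case: c d => [a b] [a' b']. Qed.

Lemma ImM c d : Im (c * d) = Re c * Im d + Im c * Re d.
Proof. by case: c d => [a b] [a' b']. Qed.

Lemma Re_sum (I : Type) (s : seq I) (P : pred I) (F : I -> R[i]) :
  Re (\sum_(i <- s | P i) F i) = \sum_(i <- s | P i) Re (F i).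
Proof. exact: raddf_sum. Qed.

Lemma sqnormcM c d : sqnormc (c * d) = sqnormc c * sqnormc d.
Proof. by rewrite /sqnormc ReM ImM; ring. Qed.

Lemma sqnormc_real r : sqnormc (r%:C)%C = r ^+ 2.
Proof. by rewrite /sqnormc /= expr0n addr0. Qed.

Lemma sqnormc1 : sqnormc 1 = 1.
Proof. by rewrite sqnormc_real expr1n. Qed.

Lemma normr_Re_le c : `|Re c| <= Num.sqrt (sqnormc c).
Proof. by rewrite -sqrtr_sqr ler_wsqrtr // lerDl sqr_ge0. Qed.

Lemma normr_Im_le c : `|Im c| <= Num.sqrt (sqnormc c).
Proof. by rewrite -sqrtr_sqr ler_wsqrtr // lerDr sqr_ge0. Qed.

Lemma sqrt_sqnormc_le c : Num.sqrt (sqnormc c) <= `|Re c| + `|Im c|.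
Proof.
rewrite -[leRHS]ger0_norm ?addr_ge0 // -sqrtr_sqr ler_wsqrtr //.
rewrite /sqnormc sqrrD !real_normK ?num_real //.
by rewrite -addrA lerD2l lerDr mulrn_wge0 // mulr_ge0.
Qed.
End ComplexModulus.

Section RowVectorNorm.
Variables (R : realType) (m : nat).
Implicit Types (v w : 'rV[R[i]]_m) (c : R[i]) (r : R).

Definition vsqnorm v : R := \sum_i sqnormc (v 0 i).
Definition vdot v w : R :=
  \sum_i (Re (v 0 i) * Re (w 0 i) + Im (v 0 i) * Im (w 0 i)).
Definition vnorm v : R := Num.sqrt (vsqnorm v).

Lemma vsqnorm_ge0 v : 0 <= vsqnorm v.
Proof. by apply: sumr_ge0 => i _; apply: sqnormc_ge0. Qed.

Lemma vsqnorm_eq0 v : vsqnorm v = 0 -> v = 0.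
Proof.
move=> /(psumr_eq0P (fun i _ => sqnormc_ge0 _)) v0.
by apply/rowP => i; rewrite mxE; apply/sqnormc_eq0/v0.
Qed.

Lemma vdotvv v : vdot v v = vsqnorm v.
Proof. by apply: eq_bigr => i _; rewrite /sqnormc !expr2. Qed.

Lemma vdot0l w : vdot 0 w = 0.
Proof. by rewrite /vdot big1 // => i _; rewrite mxE !mul0r addr0. Qed.

Lemma vdotZl r v w : vdot ((r%:C)%C *: v) w = r * vdot v w.
Proof.
rewrite /vdot mulr_sumr; apply: eq_bigr => i _.
by rewrite mxE ReM ImM /=; ring.
Qed.

Lemma vsqnormD v w : vsqnorm (v + w) = vsqnorm v + 2 * vdot v w + vsqnorm w.
Proof.
rewrite /vsqnorm /vdot mulr_sumr -!big_split /=; apply: eq_bigr => i _.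
by rewrite mxE /sqnormc !raddfD /=; ring.
Qed.

Lemma vsqnormZ c v : vsqnorm (c *: v) = sqnormc c * vsqnorm v.
Proof. by rewrite /vsqnorm mulr_sumr; apply: eq_bigr => i _; rewrite mxE sqnormcM. Qed.

Lemma vdot_cauchy_schwarz v w : vdot v w ^+ 2 <= vsqnorm v * vsqnorm w.
Proof.
have [/vsqnorm_eq0 ->|v0] := eqVneq (vsqnorm v) 0.
  by rewrite vdot0l expr0n mulr_ge0 ?vsqnorm_ge0.
have vpos : 0 < vsqnorm v by rewrite lt_def v0 vsqnorm_ge0.
(* evaluate |t v + w|^2 >= 0 at its minimiser t = - vdot v w / vsqnorm v *)
have := vsqnorm_ge0 (((- vdot v w / vsqnorm v)%:C)%C *: v + w).
rewrite vsqnormD vsqnormZ sqnormc_real vdotZl.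
set A := vsqnorm v; set x := vdot v w.
have -> : (- x / A) ^+ 2 * A + 2 * (- x / A * x) + vsqnorm w = vsqnorm w - x ^+ 2 / A.
  by field; rewrite v0.
by rewrite subr_ge0 ler_pdivrMr // mulrC.
Qed.

Lemma vnorm_ge0 v : 0 <= vnorm v.
Proof. exact: sqrtr_ge0. Qed.

Lemma sqr_vnorm v : vnorm v ^+ 2 = vsqnorm v.
Proof. exact/sqr_sqrtr/vsqnorm_ge0. Qed.

Lemma vnorm0 : vnorm 0 = 0.
Proof.
by rewrite /vnorm /vsqnorm big1 ?sqrtr0 // => i _; rewrite mxE sqnormc_real expr0n.
Qed.

Lemma vnorm_eq0 v : vnorm v = 0 -> v = 0.
Proof.
move=> /eqP; rewrite sqrtr_eq0 => v0.
by apply/vsqnorm_eq0/le_anti; rewrite v0 vsqnorm_ge0.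
Qed.

Lemma vdot_le v w : vdot v w <= vnorm v * vnorm w.
Proof.
apply: le_trans (ler_norm _) _.
by rewrite -sqrtr_sqr -sqrtrM ?vsqnorm_ge0 // ler_wsqrtr // vdot_cauchy_schwarz.
Qed.

Lemma vnormD v w : vnorm (v + w) <= vnorm v + vnorm w.
Proof.
rewrite -(ler_pXn2r (_ : 0 < 2)%N) ?nnegrE ?addr_ge0 ?vnorm_ge0 //.
by rewrite sqr_vnorm vsqnormD sqrrD !sqr_vnorm; have := vdot_le v w; lra.
Qed.

Lemma vnormZ c v : vnorm (c *: v) = Num.sqrt (sqnormc c) * vnorm v.
Proof. by rewrite /vnorm vsqnormZ sqrtrM ?sqnormc_ge0. Qed.

Lemma vnorm_sum (I : Type) (s : seq I) (P : pred I) (F : I -> 'rV[R[i]]_m) :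
  vnorm (\sum_(i <- s | P i) F i) <= \sum_(i <- s | P i) vnorm (F i).
Proof.
apply: (big_ind2 (fun v x => vnorm v <= x)); first by rewrite vnorm0.
  by move=> v x w y vx wy; apply: le_trans (vnormD v w) (lerD vx wy).
by [].
Qed.

Lemma vnorm_delta j : vnorm (delta_mx 0 j : 'rV[R[i]]_m) = 1.
Proof.
rewrite /vnorm /vsqnorm (bigD1 j) //= big1 => [|k kj]; rewrite mxE.
  by rewrite !eqxx sqnormc1 addr0 sqrtr1.
by rewrite (negbTE kj) andbF sqnormc_real expr0n.
Qed.

Lemma entry_le_vnorm v j : Num.sqrt (sqnormc (v 0 j)) <= vnorm v.
Proof.
rewrite ler_wsqrtr // /vsqnorm (bigD1 j) //= lerDl.
by apply: sumr_ge0 => i _; apply: sqnormc_ge0.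
Qed.

Lemma vnorm_le_entries v : vnorm v <= \sum_j Num.sqrt (sqnormc (v 0 j)).
Proof.
rewrite {1}[v]row_sum_delta; apply: le_trans (vnorm_sum _ _ _) _.
by apply: ler_sum => j _; rewrite vnormZ vnorm_delta mulr1.
Qed.
End RowVectorNorm.

Section Adjoint.
Variable R : realType.

Definition adjmx m n (A : 'M[R[i]]_(m, n)) : 'M_(n, m) := map_mx conjc A^T.

Lemma adjmxK m n (A : 'M[R[i]]_(m, n)) : adjmx (adjmx A) = A.
Proof. by apply/matrixP => i j; rewrite !mxE conjcK. Qed.

Lemma adjmxD m n (A B : 'M[R[i]]_(m, n)) : adjmx (A + B) = adjmx A + adjmx B.
Proof. by rewrite /adjmx linearD map_mxD. Qed.

Lemma adjmxZ m n c (A : 'M[R[i]]_(m, n)) : adjmx (c *: A) = conjc c *: adjmx A.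
Proof. by rewrite /adjmx linearZ map_mxZ. Qed.

Lemma adjmxM m n p (A : 'M[R[i]]_(m, n)) (B : 'M_(n, p)) :
  adjmx (A *m B) = adjmx B *m adjmx A.
Proof. by rewrite /adjmx trmx_mul map_mxM. Qed.

Lemma vdotE m (v w : 'rV[R[i]]_m) : vdot v w = Re ((v *m adjmx w) 0 0).
Proof.
rewrite mxE Re_sum; apply: eq_bigr => i _.
by rewrite !mxE; case: (v 0 i) (w 0 i) => [a b] [a' b'] /=; ring.
Qed.

Lemma vdot_adjmx m n (v : 'rV[R[i]]_m) (A : 'M_(m, n)) w :
  vdot (v *m A) w = vdot v (w *m adjmx A).
Proof. by rewrite !vdotE adjmxM adjmxK mulmxA. Qed.
End Adjoint.

Section OperatorNorm.
Variables (R : realType) (m n : nat).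
Implicit Types (A B : 'M[R[i]]_(m, n)) (v : 'rV[R[i]]_m).

Definition opnorm A : R :=
  sup [set vnorm (v *m A) | v in [set v : 'rV_m | vnorm v <= 1]].

Lemma vnorm_mulmx_le_rows A v : vnorm v <= 1 ->
  vnorm (v *m A) <= \sum_i vnorm (row i A).
Proof.
move=> v1; rewrite mulmx_sum_row; apply: le_trans (vnorm_sum _ _ _) _.
apply: ler_sum => i _; rewrite vnormZ ler_piMl ?vnorm_ge0 //.
exact: le_trans (entry_le_vnorm v i) v1.
Qed.

Let opnorm_set_ne A : [set vnorm (v *m A) | v in [set v : 'rV_m | vnorm v <= 1]] !=set0.
Proof. by exists (vnorm (0 *m A)), 0; rewrite //= vnorm0 ler01. Qed.

Lemma opnorm_ub A v : vnorm v <= 1 -> vnorm (v *m A) <= opnorm A.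
Proof.
move=> v1; apply: ub_le_sup; last by exists v.
by exists (\sum_i vnorm (row i A)) => x [w w1 <-]; apply: vnorm_mulmx_le_rows.
Qed.

Lemma opnorm_le A k : (forall v, vnorm v <= 1 -> vnorm (v *m A) <= k) ->
  opnorm A <= k.
Proof.
by move=> Ak; apply: ge_sup; [exact: opnorm_set_ne | move=> x [v v1 <-]; apply: Ak].
Qed.

Lemma opnorm_ge0 A : 0 <= opnorm A.
Proof. by have := @opnorm_ub A 0; rewrite mul0mx !vnorm0; apply; apply: ler01. Qed.

Lemma vnorm_mulmx A v : vnorm (v *m A) <= vnorm v * opnorm A.
Proof.
have [v0|vpos] := eqVneq (vnorm v) 0.
  by rewrite (vnorm_eq0 v0) mul0mx !vnorm0 mul0r.
have {}vpos : 0 < vnorm v by rewrite lt_def vpos vnorm_ge0.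
have := @opnorm_ub A (((vnorm v)^-1)%:C%C *: v).
rewrite -scalemxAl !vnormZ sqnormc_real sqrtr_sqr ger0_norm ?invr_ge0 ?vnorm_ge0 //.
by rewrite mulVf ?gt_eqF // lexx => /(_ isT); rewrite mulrC ler_pdivrMr // mulrC.
Qed.

Lemma opnormD A B : opnorm (A + B) <= opnorm A + opnorm B.
Proof.
apply: opnorm_le => v v1; rewrite mulmxDr; apply: le_trans (vnormD _ _) _.
by rewrite lerD ?opnorm_ub.
Qed.

Lemma opnormZ c A : opnorm (c *: A) = Num.sqrt (sqnormc c) * opnorm A.
Proof.
have opnormZ_le d B : opnorm (d *: B) <= Num.sqrt (sqnormc d) * opnorm B.
  apply: opnorm_le => v v1; rewrite -scalemxAr vnormZ.
  by rewrite ler_wpM2l ?sqrtr_ge0 ?opnorm_ub.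
apply/le_anti; rewrite opnormZ_le /=.
have [->|c0] := eqVneq c 0.
  by rewrite sqnormc_real expr0n sqrtr0 mul0r opnorm_ge0.
have := ler_wpM2l (sqrtr_ge0 (sqnormc c)) (opnormZ_le c^-1 (c *: A)).
rewrite scalerA mulVf // scale1r mulrA -sqrtrM ?sqnormc_ge0 // -sqnormcM.
by rewrite mulfV // sqnormc1 sqrtr1 mul1r.
Qed.

Lemma entry_le_opnorm A i j : Num.sqrt (sqnormc (A i j)) <= opnorm A.
Proof.
have := @opnorm_ub A (delta_mx 0 i); rewrite vnorm_delta lexx -rowE => /(_ isT).
by apply: le_trans; have := entry_le_vnorm (row i A) j; rewrite mxE.
Qed.

Lemma opnorm_eq0 A : opnorm A = 0 -> A = 0.
Proof.
move=> A0; apply/matrixP => i j; rewrite mxE; apply/sqnormc_eq0/le_anti.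
rewrite sqnormc_ge0 andbT -sqrtr_eq0 eq_le sqrtr_ge0 andbT -A0.
exact: entry_le_opnorm.
Qed.

Lemma opnorm_le_entries A : opnorm A <= \sum_i \sum_j Num.sqrt (sqnormc (A i j)).
Proof.
apply: opnorm_le => v v1; apply: le_trans (vnorm_mulmx_le_rows A v1) _.
apply: ler_sum => i _; apply: le_trans (vnorm_le_entries _) _.
by under eq_bigr do rewrite mxE.
Qed.
End OperatorNorm.

Section OperatorNormTheory.
Variable R : realType.

Lemma opnormM m n p (A : 'M[R[i]]_(m, n)) (B : 'M_(n, p)) :
  opnorm (A *m B) <= opnorm A * opnorm B.
Proof.
apply: opnorm_le => v v1; rewrite mulmxA; apply: le_trans (vnorm_mulmx _ _) _.
by rewrite ler_wpM2r ?opnorm_ge0 ?opnorm_ub.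
Qed.

Lemma sqr_opnorm_le m n (A : 'M[R[i]]_(m, n)) :
  opnorm A ^+ 2 <= opnorm (A *m adjmx A).
Proof.
(* |v A|^2 = <v, v A A^*> <= |v A A^*| on the unit ball *)
suff : opnorm A <= Num.sqrt (opnorm (A *m adjmx A)).
  rewrite -(ler_pXn2r (_ : 0 < 2)%N) ?nnegrE ?opnorm_ge0 ?sqrtr_ge0 //.
  by rewrite sqr_sqrtr ?opnorm_ge0.
apply: opnorm_le => v v1; rewrite {1}/vnorm ler_wsqrtr // -vdotvv vdot_adjmx -mulmxA.
apply: le_trans (vdot_le _ _) _; apply: le_trans (ler_wpM2r (vnorm_ge0 _) v1) _.
by rewrite mul1r opnorm_ub.
Qed.

Lemma opnorm_adjmx m n (A : 'M[R[i]]_(m, n)) : opnorm (adjmx A) = opnorm A.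
Proof.
have le_adj k l (B : 'M[R[i]]_(k, l)) : opnorm B <= opnorm (adjmx B).
  have [B0|Bpos] := eqVneq (opnorm B) 0; first by rewrite B0 opnorm_ge0.
  rewrite -(ler_pM2r (_ : 0 < opnorm B)) ?lt_def ?Bpos ?opnorm_ge0 //.
  by rewrite -expr2 mulrC; apply: le_trans (sqr_opnorm_le B) (opnormM _ _).
by apply/le_anti; rewrite le_adj andbT -{2}(adjmxK A) le_adj.
Qed.

Lemma opnorm_cstar m n (A : 'M[R[i]]_(m, n)) :
  opnorm (adjmx A *m A) = opnorm A ^+ 2.
Proof.
apply/le_anti/andP; split.
  by apply: le_trans (opnormM _ _) _; rewrite opnorm_adjmx expr2.
by have := sqr_opnorm_le (adjmx A); rewrite adjmxK opnorm_adjmx.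
Qed.
End OperatorNormTheory.

Lemma real_cauchy_cvg (R : realType) (u : nat -> R) :
  (forall e : R, 0 < e -> exists N, forall p q, (N <= p)%N -> (N <= q)%N ->
     `|u p - u q| < e) ->
  cvg (u @ \oo).
Proof.
move=> u_cauchy; apply/cauchy_cvgP/cauchy_ballP => e /u_cauchy [N uN]; near_simpl.
exists ([set p | (N <= p)%N], [set q | (N <= q)%N]); first by split; exists N.
by case=> p q [Np Nq]; rewrite /ball /= distrC; apply: uN.
Qed.

Lemma opnorm_complete (R : realType) (m n : nat) (u : nat -> 'M[R[i]]_(m, n)) :
  (forall e : R, 0 < e -> exists N, forall p q, (N <= p)%N -> (N <= q)%N ->
     opnorm (u p - u q) < e) ->
  exists L, forall e : R, 0 < e -> exists N, forall k, (N <= k)%N ->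
     opnorm (u k - L) < e.
Proof.
move=> u_cauchy.
have entry_cvg (f : R[i] -> R) : {morph f : x y / x - y} ->
    (forall c, `|f c| <= Num.sqrt (sqnormc c)) ->
    forall i j, cvg ((fun k => f (u k i j)) @ \oo).
  move=> fB f_le i j; apply: real_cauchy_cvg => e /u_cauchy [N uN].
  exists N => p q Np Nq; rewrite -fB; apply: le_lt_trans (f_le _) _.
  have := entry_le_opnorm (u p - u q) i j; rewrite !mxE => /le_lt_trans.
  by apply; apply: uN.
have cvg_Re := entry_cvg (@complex.Re R) (raddfB _) (@normr_Re_le R).
have cvg_Im := entry_cvg (@complex.Im R) (raddfB _) (@normr_Im_le R).
pose L := \matrix_(i, j) (lim ((fun k => Re (u k i j)) @ \oo) +i*
                           lim ((fun k => Im (u k i j)) @ \oo))%C.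
exists L => e e0.
pose d := e / (2 * (m * n)%:R + 1).
have d0 : 0 < d by rewrite divr_gt0 // ltr_wpDl ?mulr_ge0.
have : \forall k \near \oo, forall ij : 'I_m * 'I_n,
    `|Re ((u k - L) ij.1 ij.2)| < d /\ `|Im ((u k - L) ij.1 ij.2)| < d.
  apply: filter_forall => -[i j].
  apply: filterS2 ((cvgrPdistC_lt _ _).1 (cvg_Re i j) d d0)
                  ((cvgrPdistC_lt _ _).1 (cvg_Im i j) d d0).
  by move=> k; rewrite /L !mxE /= !raddfB.
move=> [N _ uN]; exists N => k /uN {}uN.
apply: le_lt_trans (opnorm_le_entries _) _.
apply: (@le_lt_trans _ _ (\sum_(i < m) \sum_(j < n) (d + d))).
  apply: ler_sum => i _; apply: ler_sum => j _; apply: le_trans (sqrt_sqnormc_le _) _.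
  by have [Re_lt Im_lt] := uN (i, j); rewrite lerD ?ltW.
rewrite !sumr_const !card_ord.
have -> : (d + d) *+ n *+ m = 2 * (m * n)%:R * d by rewrite natrM; ring.
by rewrite /d mulrA ltr_pdivrMr ?ltr_wpDl ?mulr_ge0 // mulrDr mulr1 mulrC ltrDl.
Qed.

Lemma matrix_cstar_axioms (R : realType) (n : nat) :
  cstar_axioms (@adjmx R n.+1 n.+1) (@opnorm R n.+1 n.+1).
Proof.
split; first exact: adjmxK.
split; first exact: adjmxD.
split; first exact: adjmxZ.
split; first by move=> A B; rewrite -!mulmxE adjmxM.
split; first exact: opnorm_eq0.
split; first exact: opnormD.
split; first by move=> c A; rewrite opnormZ normc_def rmorphM.
split; first by move=> A B; rewrite -mulmxE opnormM.
split; first by move=> A; rewrite -mulmxE opnorm_cstar.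
exact: opnorm_complete.
Qed.

Definition matrix_cstar (R : realType) (n : nat) : cstar_alg R :=
  CStarAlg (matrix_cstar_axioms R n).

Section Projections.
Variables (R : realType) (B : cstar_alg R).
Implicit Types p x y : B.

Definition is_proj p := cs_star p = p /\ p * p = p.

Lemma cs_starK x : cs_star (cs_star x) = x.
Proof. by case: (cs_ax B). Qed.

Lemma cs_starD x y : cs_star (x + y) = cs_star x + cs_star y.
Proof. by case: (cs_ax B) => _ []. Qed.

Lemma cs_starM x y : cs_star (x * y) = cs_star y * cs_star x.
Proof. by case: (cs_ax B) => _ [_ [_ []]]. Qed.

Lemma cs_star0 : cs_star (0 : B) = 0.
Proof. by apply: (addrI (cs_star 0)); rewrite -cs_starD !addr0. Qed.

Lemma cs_starN x : cs_star (- x) = - cs_star x.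
Proof. by apply: (addrI (cs_star x)); rewrite -cs_starD !subrr cs_star0. Qed.

Lemma cs_star1 : cs_star (1 : B) = 1.
Proof. by rewrite -[cs_star 1]mulr1 -{2}(cs_starK 1) -cs_starM mulr1 cs_starK. Qed.

Lemma is_proj0 : is_proj 0.
Proof. by split; rewrite ?cs_star0 ?mulr0. Qed.

Lemma is_proj1 : is_proj 1.
Proof. by split; rewrite ?cs_star1 ?mulr1. Qed.

Lemma is_proj_bool (b : bool) : is_proj b%:R.
Proof. by case: b; [apply: is_proj1 | apply: is_proj0]. Qed.

Lemma is_projC p : is_proj p -> is_proj (1 - p).
Proof.
case=> p_sa p_id; split; first by rewrite cs_starD cs_starN cs_star1 p_sa.
by rewrite mulrBl !mulrBr !mul1r !mulr1 p_id subrr subr0.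
Qed.

Lemma is_proj_bool_mul (b c : bool) p : is_proj p -> is_proj (b%:R * p * c%:R).
Proof.
by case: b; case: c; rewrite ?mul1r ?mulr1 ?mul0r ?mulr0 // => _; apply: is_proj0.
Qed.
End Projections.

Lemma sum_delta_r (X : finType) (V : pzSemiRingType) (x : X) :
  \sum_y ((y == x)%:R : V) = 1.
Proof. by rewrite (bigD1 x) //= eqxx big1 ?addr0 // => y /negbTE ->. Qed.

Lemma sum_delta_l (X : finType) (V : pzSemiRingType) (x : X) :
  \sum_y ((x == y)%:R : V) = 1.
Proof. by under eq_bigr do rewrite eq_sym; apply: sum_delta_r. Qed.

Section PairMagic.
Variables (X : finType) (a b : X).
Hypothesis neq_ab : a != b.
Variable V : pzRingType.
Implicit Types (t : V) (x y : X).

(* For a projection t, a magic unitary: a matrix of projections whose rows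
   and columns sum to 1. *)
Definition pair_magic t x y : V :=
  if (x \in [:: a; b]) && (y \in [:: a; b]) then (if x == y then t else 1 - t)
  else (x == y)%:R.

Lemma pair_magicC t x y : pair_magic t x y = pair_magic t y x.
Proof. by rewrite /pair_magic andbC eq_sym. Qed.

Lemma pair_magic_row t x : \sum_y pair_magic t x y = 1.
Proof.
rewrite /pair_magic.
have [xab|_] /= := boolP (x \in [:: a; b]); last exact: sum_delta_l.
rewrite (bigID (mem [:: a; b])) /= -big_uniq /= ?inE ?neq_ab //.
rewrite big_cons big_seq1 big1 => [|y /negbTE yNab]; last first.
  by rewrite yNab; case: eqP xab yNab => // <- ->.
move: xab; rewrite !inE !eqxx /= orbT /= => /orP[]/eqP->.
  by rewrite eqxx (negbTE neq_ab) addr0 addrC subrK.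
by rewrite eq_sym (negbTE neq_ab) eqxx addr0 subrK.
Qed.

Lemma pair_magic_col t y : \sum_x pair_magic t x y = 1.
Proof. by under eq_bigr do rewrite pair_magicC; apply: pair_magic_row. Qed.
End PairMagic.

Section ProjectionRepresentation.
Variables (R : realType) (X : finType) (a b : X).
Hypothesis neq_ab : a != b.
Variables (B : cstar_alg R) (P Q : B).
Hypotheses (projP : is_proj P) (projQ : is_proj Q).

Definition proj_rep (u v : seq X) : B :=
  match u, v with
  | [::], [::] => 1
  | [:: x], [:: y] => (x == y)%:R
  | x :: x' :: u', y :: y' :: v' =>
      (x == y)%:R * pair_magic a b (if x == a then P else Q) x' y' * (u' == v')%:R
  | _, _ => 0
  end.

Lemma proj_rep_is_proj u v : is_proj (proj_rep u v).
Proof.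
case: u v => [|x [|x' u']] [|y [|y' v']] /=;
  try exact: is_proj0; try exact: is_proj_bool.
  exact: is_proj1.
apply/is_proj_bool_mul; rewrite /pair_magic.
case: ifP => _; last exact: is_proj_bool.
by case: ifP => _; [|apply: is_projC]; case: ifP.
Qed.

Lemma proj_rep_row u v x : size u = size v ->
  proj_rep u v = \sum_y proj_rep (rcons u x) (rcons v y).
Proof.
case: u v => [|x1 [|x2 u']] [|y1 [|y2 v']] //= _.
- by rewrite sum_delta_l.
- by rewrite -mulr_suml -mulr_sumr pair_magic_row // !mulr1.
- under eq_bigr do rewrite eqseq_rcons -mulnb natrM mulrA.
  by rewrite -mulr_sumr sum_delta_l mulr1.
Qed.

Lemma proj_rep_col u v x : size u = size v ->
  proj_rep u v = \sum_z proj_rep (rcons u z) (rcons v x).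
Proof.
case: u v => [|x1 [|x2 u']] [|y1 [|y2 v']] //= _.
- by rewrite sum_delta_r.
- by rewrite -mulr_suml -mulr_sumr pair_magic_col // !mulr1.
- under eq_bigr do rewrite eqseq_rcons -mulnb natrM mulrA.
  by rewrite -mulr_sumr sum_delta_r mulr1.
Qed.

Lemma proj_rep_relations : AX_relations proj_rep.
Proof.
split=> //; try by move=> u v _; case: (proj_rep_is_proj u v).
by move=> u v x uv; split; [apply: proj_rep_row | apply: proj_rep_col].
Qed.

Lemma proj_rep_aa : proj_rep [:: a; a] [:: a; a] = P.
Proof. by rewrite /= /pair_magic !inE !eqxx /= mul1r mulr1. Qed.

Lemma proj_rep_ba : proj_rep [:: b; a] [:: b; a] = Q.
Proof. by rewrite /= /pair_magic !inE !eqxx /= eq_sym (negbTE neq_ab) mul1r mulr1. Qed.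
End ProjectionRepresentation.

Lemma AX_noncommutative (R : realType) (X : finType) (A : cstar_alg R)
    (g : seq X -> seq X -> A) (a b : X) (B : cstar_alg R) (P Q : B) :
  a != b -> is_proj P -> is_proj Q -> P * Q != Q * P -> is_universal_AX g ->
  noncommutative A.
Proof.
move=> ab projP projQ PQ [_ univ].
have [[f [[_ _ fM _ _] fg]] _] := univ _ _ (proj_rep_relations ab projP projQ).
exists (g [:: a; a] [:: a; a]), (g [:: b; a] [:: b; a]) => /(congr1 f).
by rewrite !fM !fg // proj_rep_aa proj_rep_ba //; apply/eqP.
Qed.

Section TwoNoncommutingProjections.
Variable R : realType.
Local Notation M2 := (matrix_cstar R 1).

Definition proj_e1 : M2 := delta_mx 0 0.
Definition proj_half : M2 := const_mx 2%:R^-1.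

Lemma is_proj_e1 : is_proj proj_e1.
Proof.
split; last by rewrite -mulmxE mul_delta_mx.
by apply/matrixP => i j; rewrite !mxE conjc_nat andbC.
Qed.

Lemma is_proj_half : is_proj proj_half.
Proof.
split; first by apply/matrixP => i j; rewrite !mxE conjc_inv conjc_nat.
apply/matrixP => i j; rewrite -mulmxE !mxE.
under eq_bigr do rewrite !mxE.
by rewrite sumr_const card_ord; field.
Qed.

Lemma proj_e1_half_noncommuting : proj_e1 * proj_half != proj_half * proj_e1.
Proof.
apply/negP => /eqP /matrixP /(_ 0 1).
rewrite -!mulmxE !mxE !big_ord_recl !big_ord0 !mxE /=.
by rewrite mul1r !mul0r mulr0 !addr0 => /eqP; rewrite invr_eq0 pnatr_eq0.
Qed.
End TwoNoncommutingProjections.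

Lemma nseqSr (T : Type) (i : nat) (x : T) : nseq i.+1 x = rcons (nseq i x) x.
Proof. by elim: i => //= i ->. Qed.

Section TreeAction.
Variable X : finType.
Implicit Types (pi : seq X -> {perm X}) (p u : seq X) (x : X).

(* The automorphism of the tree of words that permutes the children of each
   vertex p by pi p; the argument p is the prefix of the original word. *)
Fixpoint tree_act_from pi p u : seq X :=
  if u is x :: u' then pi p x :: tree_act_from pi (rcons p x) u' else [::].

Definition tree_act pi u := tree_act_from pi [::] u.

Lemma tree_act_from_rcons pi p u x :
  tree_act_from pi p (rcons u x) = rcons (tree_act_from pi p u) (pi (p ++ u) x).
Proof. by elim: u p => [|y u IHu] p /=; rewrite ?cats0 ?IHu ?cat_rcons. Qed.

Lemma tree_act_rcons pi u x :
  tree_act pi (rcons u x) = rcons (tree_act pi u) (pi u x).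
Proof. exact: tree_act_from_rcons. Qed.

Definition swap_at (a b : X) (j : nat) p : {perm X} :=
  if size p == j then tperm a b else 1%g.

Lemma tree_act_swap_at_small a b j u :
  (size u <= j)%N -> tree_act (swap_at a b j) u = u.
Proof.
elim/last_ind: u => // u x IHu; rewrite size_rcons => ltuj.
by rewrite tree_act_rcons IHu 1?ltnW // /swap_at ltn_eqF // perm1.
Qed.

Lemma tree_act_swap_at_nseq a b (i j : nat) : a != b ->
  (rcons (nseq i a) b == tree_act (swap_at a b j) (nseq i.+1 a)) = (i == j).
Proof.
move=> ab; rewrite nseqSr tree_act_rcons.
rewrite eqseq_rcons /swap_at size_nseq; have [<-|ij] := eqVneq i j.
  by rewrite tree_act_swap_at_small ?size_nseq // tpermL !eqxx.
by rewrite perm1 [b == a]eq_sym (negbTE ab) andbF.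
Qed.
End TreeAction.

Section TreeRepresentation.
Variables (R : realType) (X : finType) (n : nat).
Variable pis : 'I_n.+1 -> seq X -> {perm X}.
Local Notation M := (matrix_cstar R n).

(* The direct sum of the characters a_{u,v} |-> [v = sigma_i u] of the tree
   automorphisms sigma_i := tree_act (pis i). *)
Definition tree_rep (u v : seq X) : M :=
  diag_mx (\row_i ((v == tree_act (pis i) u)%:R)).

Lemma is_proj_diag_bool (d : 'I_n.+1 -> bool) : is_proj (diag_mx (\row_i (d i)%:R) : M).
Proof.
split.
  rewrite /= /adjmx tr_diag_mx map_diag_mx; congr diag_mx.
  by apply/rowP => i; rewrite !mxE rmorph_nat.
rewrite -mulmxE mul_diag_mx; apply/matrixP => i j; rewrite !mxE.
by case: (d i); rewrite ?mul1r ?mul0r ?mul0rn.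
Qed.

Lemma tree_rep_row u v x :
  tree_rep u v = \sum_y tree_rep (rcons u x) (rcons v y).
Proof.
rewrite /tree_rep -raddf_sum; congr diag_mx; apply/rowP => i; rewrite summxE !mxE.
under eq_bigr do rewrite mxE tree_act_rcons eqseq_rcons -mulnb natrM.
by rewrite -mulr_sumr sum_delta_r mulr1.
Qed.

Lemma tree_rep_col u v x :
  tree_rep u v = \sum_z tree_rep (rcons u z) (rcons v x).
Proof.
rewrite /tree_rep -raddf_sum; congr diag_mx; apply/rowP => i; rewrite summxE !mxE.
(* exactly one letter z is sent to x by the permutation pis i u *)
under eq_bigr do rewrite mxE tree_act_rcons eqseq_rcons -mulnb natrM
  -[in x == _](permKV (pis i u) x) (inj_eq perm_inj).
by rewrite -mulr_sumr sum_delta_l mulr1.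
Qed.

Lemma tree_rep_relations : AX_relations tree_rep.
Proof.
split.
- rewrite /tree_rep -[1 : M]/(1%:M) -diag_const_mx; congr diag_mx.
  by apply/rowP => i; rewrite !mxE.
- by move=> u v _; case: (is_proj_diag_bool (fun i => v == tree_act (pis i) u)).
- by move=> u v _; case: (is_proj_diag_bool (fun i => v == tree_act (pis i) u)).
- by move=> u v x _; split; [apply: tree_rep_row | apply: tree_rep_col].
Qed.

Lemma tree_rep_diag u v i : tree_rep u v i i = (v == tree_act (pis i) u)%:R.
Proof. by rewrite !mxE eqxx mulr1n. Qed.
End TreeRepresentation.

Definition free_family (K : pzRingType) (V : lmodType K) (n : nat) (v : 'I_n -> V) :=
  forall c : 'I_n -> K, \sum_(i < n) c i *: v i = 0 -> forall i, c i = 0.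

Lemma free_family_of_image (K : pzRingType) (U V : lmodType K) (n : nat)
    (f : U -> V) (v : 'I_n -> U) :
  (forall x y, f (x + y) = f x + f y) -> (forall c x, f (c *: x) = c *: f x) ->
  free_family (f \o v) -> free_family v.
Proof.
move=> fD fZ free_fv c cv0; apply: free_fv.
have f0 : f 0 = 0 by apply: (addrI (f 0)); rewrite -fD !addr0.
under eq_bigr do rewrite -fZ.
by rewrite -(big_morph f fD f0) cv0.
Qed.

Lemma free_family_of_coords (K : pzRingType) (p q n : nat) (M : 'I_n -> 'M[K]_(p, q))
    (r : 'I_n -> 'I_p) (s : 'I_n -> 'I_q) :
  (forall k i, M k (r i) (s i) = (k == i)%:R) -> free_family M.
Proof.
move=> Mrs c cM0 i; have /matrixP /(_ (r i) (s i)) := cM0.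
rewrite summxE mxE (bigD1 i) //= big1 => [|k ki]; rewrite mxE Mrs.
  by rewrite eqxx mulr1 addr0.
by rewrite (negbTE ki) mulr0.
Qed.

Lemma AX_infinite_dimensional (R : realType) (X : finType) (A : cstar_alg R)
    (g : seq X -> seq X -> A) (a b : X) :
  a != b -> is_universal_AX g -> infinite_dimensional A.
Proof.
move=> ab [_ univ] n.
pose pis (j : 'I_n.+1) := swap_at a b j.
have [[f [[fD fZ _ _ _] fg]] _] := univ _ _ (@tree_rep_relations R X n pis).
exists (fun i : 'I_n => g (nseq i.+1 a) (rcons (nseq i a) b)).
apply: (free_family_of_image fD fZ).
pose w := widen_ord (leqnSn n).
apply: (@free_family_of_coords _ _ _ _ _ w w) => k i /=.
rewrite fg; last by rewrite /= size_rcons size_nseq.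
by rewrite tree_rep_diag tree_act_swap_at_nseq.
Qed.

Theorem proposition3p7 (R : realType) (X : finType) (A : cstar_alg R)
    (g : seq X -> seq X -> A) :
  (1 < #|X|)%N -> is_universal_AX g ->
  noncommutative A /\ infinite_dimensional A.
Proof.
move=> /card_gt1P [a [b [_ _ ab]]] univ; split.
  exact: AX_noncommutative ab (@is_proj_e1 R) (@is_proj_half R)
    (@proj_e1_half_noncommuting R) univ.
exact: AX_infinite_dimensional ab univ.
Qed.
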